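(* Let $\mathcal{F}$ be a multidiforest. Then the complex of directed trees $DT(\mathcal{F})$ is vertex decomposable.
   Context: A multidigraph $G$ consists of finite sets $V$ (vertices) and $E$ (edges) with maps $s,t:E\to V$ (source and target); distinct edges may have the same source and target. Its underlying graph $G^{un}$ has vertex set $V$, with $u,v$ adjacent iff some edge $e$ has $\{s(e),t(e)\}=\{u,v\}$ (in particular a loop $s(e)=t(e)$ makes $G^{un}$ have a loop). $G$ is a multidiforest if $G^{un}$ is a (simple) forest. A directed cycle in $G$ is a connected subgraph $C$ in which every vertex of $C$ is the source of exactly one edge of $C$ and the target of exactly one edge of $C$. A directed forest is a multidigraph with no directed cycle in which distinct edges have distinct targets. The complex of directed trees $DT(G)$ is the simplicial complex on $E$ whose simplices are the subsets $\sigma\subseteq E$ such that the subgraph with edge set $\sigma$ is a directed forest. For a simplicial complex $K$ and a vertex $v$, $\mathrm{lk}(v,K)=\{\tau\in K: v\notin\tau,\ \tau\cup\{v\}\in K\}$ and $\mathrm{del}(v,K)=\{\tau\in K: v\notin\tau\}$. A simplicial complex $K$ is vertex decomposable if $K$ is a simplex (the set of all subsets of a finite set, including $\{\emptyset\}$), or $K$ contains a vertex $v$ such that (i) both $\mathrm{lk}(v,K)$ and $\mathrm{del}(v,K)$ are vertex decomposable, and (ii) every facet (maximal simplex) of $\mathrm{del}(v,K)$ is a facet of $K$. *)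

From mathcomp Require Import all_boot.
Set Implicit Arguments. Unset Strict Implicit. Unset Printing Implicit Defensive.

Section Multidigraph.
Variables (V E : finType) (s t : E -> V).

Definition un_adj : rel V :=
  fun u v => [exists e, ((s e == u) && (t e == v)) || ((s e == v) && (t e == u))].

(* G^un is a simple forest: no loops and no cycle (a closed walk through at
   least 3 pairwise distinct vertices). *)
Definition multidiforest : Prop :=
  (forall v, ~~ un_adj v v) /\
  ~ (exists p : seq V, [&& 3 <= size p, uniq p & path.cycle un_adj p]).

Definition adj_in (D : {set E}) : rel V :=
  fun x y => [exists e in D, ((s e == x) && (t e == y)) || ((s e == y) && (t e == x))].

Definition is_dicycle (W : {set V}) (D : {set E}) : bool :=
  [&& W != set0,
      [forall e in D, (s e \in W) && (t e \in W)],
      [forall v in W, (#|[set e in D | s e == v]| == 1)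
                      && (#|[set e in D | t e == v]| == 1)] &
      [forall x in W, forall y in W, connect (adj_in D) x y]].

Definition directed_forest (sigma : {set E}) : bool :=
  ~~ [exists W : {set V}, exists D : {set E}, (D \subset sigma) && is_dicycle W D]
  && [forall e1 in sigma, forall e2 in sigma, (t e1 == t e2) ==> (e1 == e2)].

Definition DT : {set {set E}} := [set sigma | directed_forest sigma].

End Multidigraph.

Section Complexes.
Variable E : finType.

Definition lk (v : E) (K : {set {set E}}) : {set {set E}} :=
  [set tau in K | (v \notin tau) && (v |: tau \in K)].

Definition del (v : E) (K : {set {set E}}) : {set {set E}} :=
  [set tau in K | v \notin tau].

Definition is_facet (F : {set E}) (K : {set {set E}}) : Prop :=
  F \in K /\ (forall G, G \in K -> F \subset G -> G = F).

Inductive vertex_decomposable : {set {set E}} -> Prop :=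
| vd_simplex (A : {set E}) : vertex_decomposable (powerset A)
| vd_shed (K : {set {set E}}) (v : E) :
    [set v] \in K ->
    vertex_decomposable (lk v K) ->
    vertex_decomposable (del v K) ->
    (forall F, is_facet F (del v K) -> is_facet F K) ->
    vertex_decomposable K.

End Complexes.

From mathcomp Require Import all_boot.
Set Implicit Arguments. Unset Strict Implicit. Unset Printing Implicit Defensive.

(* Call two distinct edges x, y of a multidigraph in conflict when they have
   the same target or are antiparallel (s x = t y and t x = s y).  In a
   multidiforest the only possible directed cycles have length two, so DT(F)
   is exactly the independence complex IC of this conflict graph (DT_IC).

   For an independence complex IC(A) of a symmetric irreflexive conflict
   relation there is a simple shedding criterion: if g, e conflict and every
   other conflict partner of g in A also conflicts with e, then e is a
   shedding vertex, with lk e = IC(A minus the closed neighbourhood of e) and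
   del e = IC(A \ e) (IC_vertex_decomposable, by induction on #|A|).

   Finally such a dominated conflict exists in every non-independent set of
   edges of a multidiforest (dconf_dominated): otherwise one can extend any
   conflicting edge backwards indefinitely, which traces an infinite
   non-backtracking walk in the underlying forest, and no such walk exists
   (forest_no_nonbacktracking_walk). *)

Lemma path_iota (r : rel nat) (n i : nat) :
  (forall k, r k k.+1) -> path r i (iota i.+1 n).
Proof. by move=> r_succ; elim: n i => //= n IH i; rewrite r_succ IH. Qed.

Lemma last_iota (n i : nat) : last i (iota i.+1 n) = i + n.
Proof. by elim: n i => [|n IH] i /=; rewrite ?addn0 // IH addnS. Qed.

Lemma finite_dependent_choice (T : finType) (Q : pred T) (R : rel T) (x0 : T) :
  Q x0 -> (forall x, Q x -> exists2 y, Q y & R x y) ->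
  exists g : nat -> T, forall i, Q (g i) /\ R (g i) (g i.+1).
Proof.
move=> Qx0 stepQ.
pose next x := if [pick y | Q y && R x y] is Some y then y else x.
have next_spec x : Q x -> Q (next x) && R x (next x).
  move=> Qx; rewrite /next; case: pickP => // none.
  by case: (stepQ x Qx) => y Qy Rxy; move: (none y); rewrite Qy Rxy.
have Q_iter i : Q (iter i next x0).
  by elim: i => //= i IH; case/andP: (next_spec _ IH).
exists (fun i => iter i next x0) => i; split => //.
by case/andP: (next_spec _ (Q_iter i)).
Qed.

Section ForestWalks.
Variables (V E : finType) (s t : E -> V).

Lemma closed_segment_cycle (w : nat -> V) (i d : nat) :
  (forall k, un_adj s t (w k) (w k.+1)) -> w (i + d.+1) = w i ->
  path.cycle (un_adj s t) (map w (iota i d.+1)).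
Proof.
move=> w_adj closed; rewrite /= rcons_path path_map path_iota //=.
by rewrite last_map last_iota -closed addnS.
Qed.

(* A walk is non-backtracking when it never returns immediately to the
   vertex it came from. Such a walk in a forest never revisits a vertex,
   since a shortest return would be a loop (d = 1), a backtrack (d = 2) or a
   cycle of the forest (d >= 3); by pigeonhole it thus cannot be infinite. *)
Lemma forest_no_nonbacktracking_walk (w : nat -> V) :
  multidiforest s t ->
  (forall i, un_adj s t (w i) (w i.+1)) -> ~ (forall i, w i.+2 != w i).
Proof.
move=> [no_loop no_cycle] w_adj w_nb.
have no_return d i : 0 < d -> w (i + d) != w i.
  elim/ltn_ind: d i => d IH i d_gt0; apply/eqP => closed.
  have [uniq_seg | /(uniqPn (w 0))] := boolP (uniq (map w (iota i d))).
    case: d IH d_gt0 closed uniq_seg => [|[|[|d]]] // _ _ closed uniq_seg.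
    - by move: (no_loop (w i)); rewrite -{2}closed addn1 w_adj.
    - by move: (w_nb i); rewrite -closed addn2 eqxx.
    apply: no_cycle; exists (map w (iota i d.+3)).
    by rewrite size_map size_iota uniq_seg closed_segment_cycle.
  case=> i1 [j1 [lt_ij]]; rewrite size_map size_iota => lt_jd.
  have lt_id := ltn_trans lt_ij lt_jd.
  rewrite !(nth_map 0) ?size_iota // !nth_iota // => repeat.
  have shorter : j1 - i1 < d by exact: leq_ltn_trans (leq_subr _ _) lt_jd.
  have gap_gt0 : 0 < j1 - i1 by rewrite subn_gt0.
  move: (IH _ shorter (i + i1) gap_gt0).
  by rewrite -addnA subnKC ?(ltnW lt_ij) // repeat eqxx.
have : ~~ injectiveb (fun i : 'I_#|V|.+1 => w i).
  by apply/negP => /injectiveP /leq_card; rewrite card_ord ltnn.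
case/injectivePn => i [j neq_ij eq_w].
wlog lt_ij : i j neq_ij eq_w / i < j.
  move=> sym; case: (ltngtP i j) => [|lt_ji|/val_inj eq_ij]; first exact: sym.
  - by apply: (sym j i _ (esym eq_w) lt_ji); rewrite eq_sym.
  - by rewrite eq_ij eqxx in neq_ij.
have gap_gt0 : 0 < j - i by rewrite subn_gt0.
by move: (no_return _ i gap_gt0); rewrite subnKC ?(ltnW lt_ij) // eq_w eqxx.
Qed.

End ForestWalks.

Section IndependenceComplex.
Variables (E : finType) (conf : rel E).
Hypothesis conf_sym : symmetric conf.
Hypothesis conf_irr : irreflexive conf.

Definition indep (S : {set E}) : bool :=
  [forall x in S, forall y in S, ~~ conf x y].

Definition IC (A : {set E}) : {set {set E}} :=
  [set S : {set E} | (S \subset A) && indep S].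

Lemma indepP (S : {set E}) :
  reflect (forall x y, x \in S -> y \in S -> ~~ conf x y) (indep S).
Proof.
apply: (iffP forall_inP) => [indepS x y Sx Sy | indepS x Sx].
  by move/forall_inP: (indepS x Sx); apply.
by apply/forall_inP => y Sy; apply: indepS.
Qed.

Lemma indepU1 (x : E) (S : {set E}) :
  indep (x |: S) = indep S && [forall y in S, ~~ conf x y].
Proof.
apply/indepP/andP => [indepxS | [/indepP indepS /forall_inP xS]].
  split; first by apply/indepP => y z Sy Sz; apply: indepxS; rewrite setU1r.
  by apply/forall_inP => y Sy; apply: indepxS; rewrite ?setU11 ?setU1r.
move=> y z; rewrite !inE => /predU1P [->|Sy] /predU1P [->|Sz].
- by rewrite conf_irr.
- exact: xS.
- by rewrite conf_sym xS.
- exact: indepS.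
Qed.

Lemma IC_indep (A : {set E}) : indep A -> IC A = powerset A.
Proof.
move=> /indepP indepA; apply/setP => S; rewrite !inE.
case: (boolP (S \subset A)) => //= /subsetP SA.
by apply/indepP => x y Sx Sy; apply: indepA; apply: SA.
Qed.

Definition nonnbhd (A : {set E}) (e : E) : {set E} :=
  [set h in A | (h != e) && ~~ conf e h].

Lemma lk_IC (A : {set E}) (e : E) : e \in A -> lk e (IC A) = IC (nonnbhd A e).
Proof.
move=> Ae; apply/setP => S; rewrite !inE indepU1 subUset sub1set Ae /=.
apply/idP/andP => [/and5P [/andP [SA ->] eS _ _ /forall_inP e_free] |
                   [/subsetP SnA indepS]].
  split=> //; apply/subsetP => h Sh; rewrite inE (subsetP SA) ?e_free //=.
  by rewrite andbT; apply: contraNneq eS => <-.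
have SA : S \subset A by apply/subsetP => h /SnA; rewrite inE => /andP [].
have eS : e \notin S by apply/negP => /SnA; rewrite inE eqxx andbF.
rewrite SA indepS eS /=; apply/forall_inP => h /SnA.
by rewrite inE => /and3P [].
Qed.

Lemma del_IC (A : {set E}) (e : E) : del e (IC A) = IC (A :\ e).
Proof.
apply/setP => S; rewrite !inE subsetD1.
by case: (S \subset A); case: (indep S); case: (e \in S).
Qed.

(* If every conflict partner of g other than e also conflicts with e, then e
   is shedding: a facet F of the deletion cannot be extended by e, since then
   F + g would be a larger independent set avoiding e. *)
Lemma IC_shedding (A : {set E}) (g e : E) :
  g \in A -> conf g e -> (forall h, h \in A -> conf g h -> h = e \/ conf e h) ->
  forall F, is_facet F (del e (IC A)) -> is_facet F (IC A).
Proof.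
move=> Ag conf_ge dominated F [delF maxF].
move: delF; rewrite del_IC inE subsetD1 -andbA => /and3P [FA eF indepF].
split=> [|G]; first by rewrite inE FA indepF.
rewrite inE => /andP [GA indepG] FG.
have [eG|eG] := boolP (e \in G); last first.
  by apply: maxF; rewrite // del_IC inE subsetD1 GA eG.
have e_free y : y \in F -> ~~ conf e y.
  by move=> Fy; move/indepP: indepG; apply; rewrite // (subsetP FG).
have g_free y : y \in F -> ~~ conf g y.
  move=> Fy; apply/negP => /(dominated y (subsetP FA y Fy)) [eqye|].
    by move: eF; rewrite -eqye Fy.
  by apply/negP; apply: e_free.
have ge : g != e by apply: contraTneq conf_ge => ->; rewrite conf_irr.
have gF : g |: F = F.
  apply: maxF; last exact: subsetUr.
  rewrite del_IC inE subsetD1 subUset sub1set Ag FA indepU1 indepF.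
  by rewrite !inE negb_or eq_sym ge eF; apply/forall_inP.
have gG : g \in G by rewrite (subsetP FG) // -gF setU11.
by move/indepP: indepG => /(_ g e gG eG); rewrite conf_ge.
Qed.

Definition has_dominated_conflict (A : {set E}) : Prop :=
  exists g e, [/\ g \in A, e \in A, conf g e &
    forall h, h \in A -> conf g h -> h = e \/ conf e h].

Hypothesis dominated_conflict : forall A, ~~ indep A -> has_dominated_conflict A.

Lemma IC_vertex_decomposable (A : {set E}) : vertex_decomposable (IC A).
Proof.
have [n] := ubnP #|A|; elim: n A => // n IH A ltA.
case: (boolP (indep A)) => [indepA|].
  by rewrite IC_indep //; apply: vd_simplex.
case/dominated_conflict => g [e [Ag Ae conf_ge dom]].
have shrink (B : {set E}) : B \proper A -> vertex_decomposable (IC B).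
  by move=> BA; apply: IH; exact: leq_trans (proper_card BA) ltA.
apply: (@vd_shed _ _ e).
- rewrite inE sub1set Ae /=; apply/indepP => x y; rewrite !inE => /eqP-> /eqP->.
  by rewrite conf_irr.
- rewrite lk_IC //; apply: shrink; rewrite properEneq.
  apply/andP; split; last by apply/subsetP => h; rewrite inE => /andP [].
  by apply/eqP => eqA; move: Ae; rewrite -eqA inE eqxx andbF.
- by rewrite del_IC; apply: shrink; apply: properD1.
- exact: IC_shedding Ag conf_ge dom.
Qed.

End IndependenceComplex.

Lemma pair_select (T : finType) (x y : T) (p : pred T) :
  p x -> ~~ p y -> [set e in [set x; y] | p e] = [set x].
Proof.
move=> px npy; apply/setP => e; rewrite !inE.
case: (eqVneq e x) => [->|_] //=.
by case: (eqVneq e y) => [->|]; rewrite ?(negbTE npy).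
Qed.

Section DirectedConflicts.
Variables (V E : finType) (s t : E -> V).
Hypothesis loopless : forall e, s e != t e.

Definition antiparallel (x y : E) : bool := (s x == t y) && (t x == s y).

Definition dconf : rel E :=
  fun x y => (x != y) && ((t x == t y) || antiparallel x y).

Lemma dconf_sym : symmetric dconf.
Proof.
move=> x y; rewrite /dconf /antiparallel eq_sym (eq_sym (t x)).
by rewrite (eq_sym (s x)) (eq_sym (t x) (s y)) (andbC (s y == t x)).
Qed.

Lemma dconf_irr : irreflexive dconf.
Proof. by move=> x; rewrite /dconf eqxx. Qed.

Lemma dicycle_antiparallel (x y : E) :
  antiparallel y x -> is_dicycle s t [set s x; t x] [set x; y].
Proof.
case/andP => /eqP sy /eqP ty.
have tsx : t x != s x by rewrite eq_sym loopless.
have yx : y != x by apply: contraNneq (loopless x) => eyx; rewrite -{1}eyx sy.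
have pick_x (p : pred E) : p x -> ~~ p y -> #|[set e in [set x; y] | p e]| == 1.
  by move=> px npy; rewrite pair_select ?cards1.
have pick_y (p : pred E) : p y -> ~~ p x -> #|[set e in [set x; y] | p e]| == 1.
  by move=> py npx; rewrite setUC pair_select ?cards1.
apply/and4P; split.
- by apply/set0Pn; exists (s x); rewrite !inE eqxx.
- apply/forall_inP => e; rewrite !inE => /orP [] /eqP ->;
  by rewrite ?sy ?ty !eqxx ?orbT.
- apply/forall_inP => v; rewrite !inE => /orP [] /eqP ->; apply/andP; split.
  + by apply: pick_x; rewrite /= ?sy ?ty ?eqxx ?tsx ?loopless.
  + by apply: pick_y; rewrite /= ?sy ?ty ?eqxx ?tsx ?loopless.
  + by apply: pick_y; rewrite /= ?sy ?ty ?eqxx ?tsx ?loopless.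
  + by apply: pick_x; rewrite /= ?sy ?ty ?eqxx ?tsx ?loopless.
- have adj_x : adj_in s t [set x; y] (s x) (t x).
    by apply/existsP; exists x; rewrite !inE !eqxx.
  have adj_x' : adj_in s t [set x; y] (t x) (s x).
    by apply/existsP; exists x; rewrite !inE !eqxx orbT.
  apply/forall_inP => a; rewrite !inE => /orP [] /eqP ->;
  apply/forall_inP => b; rewrite !inE => /orP [] /eqP ->;
  by rewrite ?connect0 ?connect1.
Qed.

Lemma antiparallel_dconf (x y : E) : antiparallel x y -> dconf x y.
Proof.
move=> anti; rewrite /dconf anti orbT andbT.
apply: contraNneq (loopless x) => exy; case/andP: anti => /eqP -> _.
by rewrite exy.
Qed.

(* A directed forest has distinct targets and no directed 2-cycle. *)
Lemma directed_forest_indep (S : {set E}) :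
  directed_forest s t S -> indep dconf S.
Proof.
case/andP => no_dicycle /forall_inP target_inj; apply/indepP => x y Sx Sy.
apply/negP => /andP [neq_xy /orP [same_t | anti]].
  move/forall_inP: (target_inj x Sx) => /(_ y Sy).
  by rewrite same_t (negbTE neq_xy).
move/negP: no_dicycle; apply; apply/existsP; exists [set s y; t y].
apply/existsP; exists [set y; x].
by rewrite dicycle_antiparallel // andbT subUset !sub1set Sx Sy.
Qed.

Lemma undominated_shape (A : {set E}) (g e h : E) :
  e \in A -> h \in A -> dconf g e -> dconf g h -> h != e -> ~~ dconf e h ->
  (exists2 a, a \in A & antiparallel a g) /\
  (exists2 k, k \in A & (t k == t g) && (s k != s g)).
Proof.
move=> Ae Ah /andP [_ conf_ge] /andP [_ conf_gh] he; rewrite /dconf eq_sym he /=.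
case/orP: conf_ge => [/eqP te | /andP [/eqP se /eqP te]];
case/orP: conf_gh => [/eqP th | /andP [/eqP sh /eqP th]].
- by rewrite -te -th eqxx.
- move=> not_conf; split; first by exists h; rewrite // /antiparallel sh th !eqxx.
  exists e; rewrite // te eqxx; apply: contra not_conf => /eqP es.
  by rewrite /antiparallel es sh -te th !eqxx orbT.
- move=> not_conf; split; first by exists e; rewrite // /antiparallel se te !eqxx.
  exists h; rewrite // th eqxx; apply: contra not_conf => /eqP hs.
  by rewrite /antiparallel -th -se hs -te !eqxx orbT.
- by rewrite -se -sh eqxx.
Qed.

Definition in_conflict (A : {set E}) (k : E) : bool := [exists e in A, dconf k e].

(* When no conflict in A is dominated, any conflicting edge g can be preceded
   by a conflicting edge k entering s g but not coming from t g: take the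
   antiparallel partner a of g, then an edge of A entering t a = s g from a
   vertex other than s a = t g. *)
Lemma backward_extension (A : {set E}) (g : E) :
  (forall g' e, g' \in A -> e \in A -> dconf g' e ->
     exists2 h, h \in A & [&& dconf g' h, h != e & ~~ dconf e h]) ->
  g \in A -> in_conflict A g ->
  exists2 k, (k \in A) && in_conflict A k & (t k == s g) && (s k != t g).
Proof.
move=> undominated Ag conflict_g.
have shape g' : g' \in A -> in_conflict A g' ->
    (exists2 a, a \in A & antiparallel a g') /\
    (exists2 k, k \in A & (t k == t g') && (s k != s g')).
  move=> Ag' /exists_inP [e Ae conf_e].
  case: (undominated g' e Ag' Ae conf_e) => h Ah /and3P [conf_h he not_conf].
  exact: undominated_shape Ae Ah conf_e conf_h he not_conf.
case: (shape g Ag conflict_g) => [[a Aa anti_ag] _].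
case/andP: (anti_ag) => /eqP sa /eqP ta.
have conflict_a : in_conflict A a.
  by apply/exists_inP; exists g => //; apply: antiparallel_dconf.
case: (shape a Aa conflict_a) => [_ [k Ak /andP [/eqP tk sk]]].
exists k; last by rewrite tk ta -sa sk eqxx.
rewrite Ak; apply/exists_inP; exists a => //.
by rewrite /dconf tk eqxx andbT; apply: contraNneq sk => ->.
Qed.

End DirectedConflicts.

Section DirectedForests.
Variables (V E : finType) (s t : E -> V).
Hypothesis forest : multidiforest s t.

Lemma forest_loopless (e : E) : s e != t e.
Proof.
apply/eqP => loop_e; case: forest => no_loop _; move/negP: (no_loop (s e)); apply.
by apply/existsP; exists e; rewrite -loop_e !eqxx.
Qed.

(* A directed cycle inside a conflict-free set would give an infinite
   non-backtracking walk following out-edges: a backtrack is an antiparallel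
   pair. *)
Lemma indep_no_dicycle (S : {set E}) (W : {set V}) (D : {set E}) :
  indep (dconf s t) S -> D \subset S -> ~~ is_dicycle s t W D.
Proof.
move=> /indepP indepS /subsetP DS; apply/negP.
case/and4P => /set0Pn [v0 Wv0] /forall_inP D_in_W /forall_inP W_deg _.
have out_edge v : v \in W -> exists2 e, e \in D & s e == v.
  move=> Wv; case/andP: (W_deg v Wv) => /cards1P [e out_v] _.
  by exists e; move: (set11 e); rewrite -out_v inE => /andP [].
have [e0 De0 _] := out_edge v0 Wv0.
have next_edge e : e \in D -> exists2 e', e' \in D & s e' == t e.
  by move=> De; apply: out_edge; case/andP: (D_in_W e De).
have [g walk] := finite_dependent_choice De0 next_edge.
apply: (forest_no_nonbacktracking_walk (w := fun i => s (g i)) forest).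
  move=> i; case: (walk i) => _ /eqP ->.
  by apply/existsP; exists (g i); rewrite !eqxx.
move=> i; apply/eqP => back.
case: (walk i) (walk i.+1) => Dgi /eqP si [Dgi1 /eqP si1].
have anti : antiparallel s t (g i.+1) (g i).
  by rewrite /antiparallel si -back si1 !eqxx.
move: (indepS _ _ (DS _ Dgi1) (DS _ Dgi)).
by rewrite (antiparallel_dconf forest_loopless anti).
Qed.

Lemma indep_directed_forest (S : {set E}) :
  indep (dconf s t) S -> directed_forest s t S.
Proof.
move=> indepS; apply/andP; split.
  apply/existsPn => W; apply/existsPn => D; apply/negP => /andP [DS].
  by move=> cycle_WD; move/negP: (indep_no_dicycle W indepS DS); apply.
apply/forall_inP => x Sx; apply/forall_inP => y Sy; apply/implyP => same_t.
case: (eqVneq x y) => // neq_xy.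
by move/indepP: indepS => /(_ x y Sx Sy); rewrite /dconf neq_xy same_t.
Qed.

Lemma DT_IC : DT s t = IC (dconf s t) [set: E].
Proof.
apply/setP => S; rewrite !inE subsetT; apply/idP/idP.
  exact/directed_forest_indep/forest_loopless.
exact: indep_directed_forest.
Qed.

(* Every dependent set of edges has a dominated conflict; otherwise
   backward_extension yields an infinite non-backtracking walk through the
   targets of the edges. *)
Lemma dconf_dominated (A : {set E}) :
  ~~ indep (dconf s t) A -> has_dominated_conflict (dconf s t) A.
Proof.
move=> dependentA.
case: (boolP [exists g, exists e, [&& g \in A, e \in A, dconf s t g e &
          [forall h in A, dconf s t g h ==> (h == e) || dconf s t e h]]]).
  case/existsP => g /existsP [e /and4P [Ag Ae conf_ge /forall_inP dom]].
  exists g, e; split => // h Ah conf_gh; move: (dom h Ah); rewrite conf_gh /=.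
  by case/orP => [/eqP ->|]; [left | right].
move/existsPn => no_dominated; exfalso.
have undominated g e : g \in A -> e \in A -> dconf s t g e ->
    exists2 h, h \in A & [&& dconf s t g h, h != e & ~~ dconf s t e h].
  move=> Ag Ae conf_ge; move/existsPn: (no_dominated g) => /(_ e).
  rewrite Ag Ae conf_ge /= => /forall_inPn [h Ah].
  by rewrite negb_imply negb_or => ?; exists h.
have [g0 start] : exists g0, (g0 \in A) && in_conflict s t A g0.
  move/forall_inPn: dependentA => [x Ax /forall_inPn [y Ay]].
  by rewrite negbK => conf_xy; exists x; rewrite Ax; apply/exists_inP; exists y.
have extend g : (g \in A) && in_conflict s t A g ->
    exists2 k, (k \in A) && in_conflict s t A k & (t k == s g) && (s k != t g).
  case/andP => Ag conflict_g.
  exact: (backward_extension forest_loopless undominated Ag conflict_g).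
have [g walk] := finite_dependent_choice
  (Q := fun k => (k \in A) && in_conflict s t A k) start extend.
apply: (forest_no_nonbacktracking_walk (w := fun i => t (g i)) forest).
  move=> i; case: (walk i) => _ /andP [/eqP tg _].
  by apply/existsP; exists (g i); rewrite tg !eqxx orbT.
move=> i; case: (walk i.+1) => _ /andP [/eqP -> _].
by case: (walk i) => _ /andP [].
Qed.

End DirectedForests.

Theorem theorem5p2 (V E : finType) (s t : E -> V) :
  multidiforest s t -> vertex_decomposable (DT s t).
Proof.
move=> forest; rewrite DT_IC //.
apply: IC_vertex_decomposable; [exact: dconf_sym | exact: dconf_irr |].
exact: dconf_dominated.
Qed.
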